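(* Let $(S,\mathcal{S})$ be a measurable space with $\Delta\in\mathcal{S}\otimes\mathcal{S}$ and let $\pi:\Omega \to C(S)$ be a constructive cr-set with independent increments. Then there exist finite measures $\mu_{n}:\mathcal{S}\to [0,\infty)$, $n\in\mathbb{N}$, such that $-\log(1-T_{\pi}(A))=\sum_{n\in\mathbb{N}}\mu_{n}(A)$ for all $A\in\mathcal{S}$ (with $-\log 0=\infty$).
   Context: $\Delta=\{(x,x)\mid x\in S\}$. $(\Omega,\mathcal{F},P)$ is a probability space; $C(S)$ is the set of countable subsets of $S$; $N_A(M)=|A\cap M|$; $\mathcal{C}(\mathcal{S})=\sigma(N_A\mid A\in\mathcal{S})$; a cr-set is an $\mathcal{F}$-$\mathcal{C}(\mathcal{S})$ measurable map $\Omega\to C(S)$, finite if its values are finite sets. A map $\tau:\Omega\to C(S)$ is constructive if $\tau(\omega)=\bigcup_k\pi_k(\omega)$ for all $\omega$ for some finite cr-sets $\pi_k$, $k\in\mathbb{N}$. A cr-set $\pi$ has independent increments if $N_{A_1}(\pi),\dots,N_{A_n}(\pi)$ are independent for all pairwise disjoint $A_1,\dots,A_n\in\mathcal{S}$. The hitting function is $T_\pi(A)=P(\pi\cap A\neq\emptyset)$, $A\in\mathcal{S}$. *)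

From HB Require Import structures.
From mathcomp Require Import all_boot all_order all_algebra.
From mathcomp Require Import finmap.
From mathcomp Require Import all_classical all_reals all_analysis.
Set Implicit Arguments. Unset Strict Implicit. Unset Printing Implicit Defensive.
Import Order.TTheory GRing.Theory Num.Theory.
Local Open Scope classical_set_scope.
Local Open Scope ring_scope.
Local Open Scope ereal_scope.

Section Defs.

(* N_A(M) = |A ∩ M| in {0,1,2,...} ∪ {oo}; None stands for oo *)
Definition Ncount (S : choiceType) (A M : set S) : option nat :=
  if pselect (finite_set (A `&` M)) is left _
  then Some #|` fset_set (A `&` M)|%fset else None.

Definition CS_gen d (S : measurableType d) : set (set (set S)) :=
  [set [set M | Ncount A M = k] | A in [set A | measurable A] & k in [set: option nat]].

Definition CS_sigma d (S : measurableType d) : set (set (set S)) :=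
  <<s [set: set S], @CS_gen d S >>.

Definition cr_set d dO (S : measurableType d) (Omega : measurableType dO)
  (pi : Omega -> set S) : Prop :=
  (forall w, countable (pi w)) /\
  (forall B, @CS_sigma d S B -> measurable (pi @^-1` B)).

Definition finite_cr_set d dO (S : measurableType d) (Omega : measurableType dO)
  (pi : Omega -> set S) : Prop :=
  cr_set pi /\ (forall w, finite_set (pi w)).

Definition constructive d dO (S : measurableType d) (Omega : measurableType dO)
  (tau : Omega -> set S) : Prop :=
  exists pik : nat -> Omega -> set S,
    (forall k, finite_cr_set (pik k)) /\
    (forall w, tau w = \bigcup_k pik k w).

Definition independent_increments d dO (S : measurableType d)
  (Omega : measurableType dO) {R : realType} (P : probability Omega R)
  (pi : Omega -> set S) : Prop :=
  forall (n : nat) (A : 'I_n -> set S),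
    (forall i, measurable (A i)) ->
    (forall i j : 'I_n, i != j -> A i `&` A j = set0) ->
    forall B : 'I_n -> set (option nat),
      P (\bigcap_(i in [set: 'I_n]) [set w | B i (Ncount (A i) (pi w))]) =
      \big[*%E/1%E]_(i < n) P [set w | B i (Ncount (A i) (pi w))].

Definition hitting d dO (S : measurableType d) (Omega : measurableType dO)
  {R : realType} (P : probability Omega R) (pi : Omega -> set S) (A : set S) : \bar R :=
  P [set w | pi w `&` A !=set0].

Definition neglog1m {R : realType} (x : \bar R) : \bar R :=
  if x == 1 then +oo else (- ln (1 - fine x)%R)%:E.

End Defs.

From HB Require Import structures.
From mathcomp Require Import all_boot all_order all_algebra finmap.
From mathcomp Require Import all_classical all_reals all_analysis.
From mathcomp Require Import measurable_realfun.
Import Order.TTheory GRing.Theory Num.Theory.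
Set Implicit Arguments. Unset Strict Implicit. Unset Printing Implicit Defensive.
Import numFieldNormedType.Exports.
Local Open Scope classical_set_scope.
Local Open Scope ring_scope.
Local Open Scope ereal_scope.

(* Let V_A be the event that pi avoids A.  Independent increments make
   A |-> P(V_A) multiplicative on disjoint sets and P is continuous from above,
   so nu(A) := -log P(V_A) = -log (1 - T_pi(A)) is a measure.  Since
   pi = \bigcup_k pi_k with finite cr-sets pi_k, and singletons are measurable
   because the diagonal is, lam(A) := sum_k 2^-(k+1) E[#(A `&` pi_k) / (1 + #pi_k)]
   is a finite measure, and lam(A) = 0 forces pi to miss A almost surely, i.e.
   nu << lam.  Finally, a measure dominated by a finite measure is a countable sum
   of finite measures: choose sets C_n of finite nu-measure whose lam-measure
   approaches the supremum over such sets; off \bigcup_n C_n every set of positive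
   lam-measure has infinite nu-measure, so there nu is the sum of countably many
   copies of lam, while on \bigcup_n C_n it is the sum of its finite restrictions to
   the disjointed C_n. *)

Section neglog.
Context (R : realType).

Definition neglog (x : R) : \bar R := if x == 0%R then +oo else (- ln x)%:E.

Lemma neglog1 : neglog 1 = 0.
Proof. by rewrite /neglog oner_eq0 ln1 oppr0. Qed.

Lemma neglogM x y : (0 <= x)%R -> (0 <= y)%R ->
  neglog (x * y) = neglog x + neglog y.
Proof.
move=> x0 y0; rewrite /neglog mulf_eq0.
have [->|xn0] /= := eqVneq x 0%R; first by rewrite addye//; case: ifP.
have [y00|yn0] := eqVneq y 0%R; first by subst y; rewrite addey.
by rewrite lnM ?posrE ?lt0r ?xn0 ?yn0// opprD EFinD.
Qed.

Lemma neglog_cvg_right (u : nat -> R) (l : R) :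
  (0 <= l)%R -> (forall n, l <= u n)%R -> u n @[n --> \oo] --> l ->
  neglog (u n) @[n --> \oo] --> neglog l.
Proof.
move=> l0 lu ul.
have [l00|ln0] := eqVneq l 0%R.
  subst l; rewrite /neglog eqxx; apply/cvgeyPge => M; near=> n.
  have un : (u n < expR (- M))%R.
    by near: n; exact: (@cvgr_lt _ _ _ _ u _ ul _ (expR_gt0 (- M))).
  case: ifPn => [_|un0]; first exact: leey.
  rewrite lee_fin lerNr -[X in (_ <= X)%R]expRK ltW// ltr_ln// posrE ?expR_gt0//.
  by rewrite lt0r un0 lu.
have lp : (0 < l)%R by rewrite lt0r ln0 l0.
rewrite /neglog (negbTE ln0).
under eq_fun do rewrite gt_eqF ?(lt_le_trans lp)//.
apply/fine_cvgP; split; first by near=> n.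
exact: cvgN (continuous_cvg _ (continuous_ln lp) ul).
Unshelve. all: by end_near.
Qed.

End neglog.

Lemma nneseries_cst_gt0 (R : realType) (x : R) : (0 < x)%R ->
  \sum_(0 <= n <oo) x%:E = +oo.
Proof.
move=> x_gt0; apply: cvg_lim => //; apply/cvgeyPge => M; near=> N.
rewrite sumEFin sumr_const_nat subn0 lee_fin -mulr_natl -ler_pdivrMr//.
by apply/ltW; near: N; exact: nbhs_infty_gtr.
Unshelve. all: by end_near.
Qed.

Lemma approx_maximizer_seq (T : Type) (R : realType) (P : set T) (g : T -> R) :
  P !=set0 -> has_ubound (g @` P) ->
  exists u : nat -> T, forall n,
    P (u n) /\ forall y, P y -> (g y <= g (u n) + n.+1%:R^-1)%R.
Proof.
move=> [x Px] ub; have gP_sup : has_sup (g @` P) by split => //; exists (g x), x.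
have approx n : exists t, P t /\ (sup (g @` P) - n.+1%:R^-1 < g t)%R.
  have e_gt0 : (0 < n.+1%:R^-1 :> R)%R by rewrite invr_gt0.
  by have [_ [t Pt <-] gt] := sup_adherent e_gt0 gP_sup; exists t.
have [u Pu] := choice approx.
exists u => n; split => [|y Py]; first exact: (Pu n).1.
apply: le_trans (ub_le_sup ub (ex_intro2 _ _ y Py erefl)) _.
by rewrite -lerBlDr ltW// (Pu n).2.
Qed.

Section finite_measure_add.
Context d (T : measurableType d) (R : realType).
Variables (m1 m2 : {finite_measure set T -> \bar R}).

HB.instance Definition _ := Measure.on (measure_add m1 m2).

Let measure_add_fin : fin_num_fun (measure_add m1 m2).
Proof. by move=> A mA; rewrite measure_addE fin_numD !fin_num_measure. Qed.

HB.instance Definition _ := Measure_isFinite.Build _ _ _ (measure_add m1 m2)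
  measure_add_fin.

End finite_measure_add.

Section null_dominated_sfinite.
Context d (T : measurableType d) (R : realType).
Variables (mu : {measure set T -> \bar R}) (lam : {finite_measure set T -> \bar R}).
Hypothesis mu_lam : mu `<< lam.

Variable C : (set T)^nat.
Hypothesis C_fin : forall n, measurable (C n) /\ mu (C n) < +oo.
Hypothesis C_max : forall n B, measurable B /\ mu B < +oo ->
  (fine (lam B) <= fine (lam (C n)) + n.+1%:R^-1)%R.

Lemma finite_off_approx_max_null A : measurable A ->
  A `&` \bigcup_n C n = set0 -> mu A < +oo -> lam A = 0.
Proof.
move=> mA AC0 muA.
have lamA_small n : (fine (lam A) <= n.+1%:R^-1)%R.
  have [mC muC] := C_fin n.
  have ACn0 : A `&` C n = set0.
    by rewrite -subset0 -AC0; apply: setIS; exact: bigcup_sup.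
  have := C_max n (conj (measurableU _ _ mA mC)
    (le_lt_trans (measureU2 mu mA mC) (lte_add_pinfty muA muC))).
  by rewrite measureU// fineD ?fin_num_measure// addrC lerD2l.
apply/eqP; rewrite eq_le measure_ge0 andbT -(fineK (fin_num_measure lam _ mA)).
rewrite lee_fin leNgt; apply/negP => /ltr_add_invr[k].
by rewrite add0r ltNge lamA_small.
Qed.

Lemma measure_off_approx_max A : measurable A ->
  A `&` \bigcup_n C n = set0 -> mu A = \sum_(0 <= n <oo) lam A.
Proof.
move=> mA AC0; have [lamA0|lamA_neq0] := eqVneq (lam A) 0.
  rewrite lamA0 eseries0//; apply: (null_content_dominatesP mu lam).1 => //.
have lamA_gt0 : (0 < fine (lam A))%R.
  by rewrite fine_gt0// lt0e lamA_neq0 measure_ge0 -ge0_fin_numE ?fin_num_measure.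
rewrite -(fineK (fin_num_measure lam _ mA)) nneseries_cst_gt0//.
apply/eqP; rewrite eq_le leey /= leNgt; apply/negP.
by move/(finite_off_approx_max_null mA AC0)/eqP; exact/negP.
Qed.

End null_dominated_sfinite.

Lemma null_dominated_finite_sfinite d (T : measurableType d) (R : realType)
    (mu : {measure set T -> \bar R}) (lam : {finite_measure set T -> \bar R}) :
  mu `<< lam -> exists s : {finite_measure set T -> \bar R}^nat,
    forall U, measurable U -> mu U = mseries s 0 U.
Proof.
move=> mu_lam.
pose mu_finite := [set B | measurable B /\ mu B < +oo].
have mu_finite0 : mu_finite !=set0 by exists set0; rewrite /mu_finite /= measure0.
have lam_ub : has_ubound ((fun B => fine (lam B)) @` mu_finite).
  exists (fine (lam setT)) => _ [B [mB _] <-].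
  by rewrite fine_le ?fin_num_measure// le_measure ?inE.
have [C C_max] := approx_maximizer_seq mu_finite0 lam_ub.
have mC n : measurable (C n) by have [[]] := C_max n.
have mCinf : measurable (\bigcup_n C n) by exact: bigcupT_measurable.
have mD n : measurable (seqDU C n).
  by apply: measurableD => //; exact: bigsetU_measurable.
have muD n : mu (seqDU C n) < +oo.
  have [[_ muC] _] := C_max n.
  by apply: le_lt_trans muC; rewrite le_measure ?inE// => x [].
pose s n : {finite_measure set T -> \bar R} :=
  measure_add (mfrestr (mD n) (muD n)) (mrestr lam (measurableC mCinf)).
exists s => A mA.
have sE n : s n A = mu (A `&` seqDU C n) + lam (A `&` ~` \bigcup_k C k).
  exact: measure_addE.
rewrite /mseries (eq_eseriesr (fun n _ => sE n)) nneseriesD//.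
rewrite (measureDI mu mA mCinf) addeC setDE.
congr (_ + _); last first.
  apply: (measure_off_approx_max mu_lam (fun n => (C_max n).1)
                                   (fun n => (C_max n).2)).
    by apply: measurableI => //; exact: measurableC.
  by rewrite -setIA setICl setI0.
rewrite seqDU_bigcup_eq setI_bigcupr; apply/esym/cvg_lim => //.
apply: measure_sigma_additive => [n|]; first exact: measurableI.
exact/trivIset_setIl/trivIset_seqDU.
Qed.

Lemma measurable_set1_diagonal d (S : measurableType d) (x : S) :
  measurable [set p : S * S | p.1 = p.2] -> measurable [set x].
Proof.
move=> /(measurable_xsection x); congr measurable.
by apply/seteqP; split => y; rewrite /xsection /= inE.
Qed.

Lemma measurable_fun_nat2 d (T : measurableType d) (R : realType)
    (f g : T -> nat) (F : nat -> nat -> \bar R) :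
  (forall j, measurable (f @^-1` [set j])) ->
  (forall j, measurable (g @^-1` [set j])) ->
  measurable_fun setT (fun w => F (f w) (g w)).
Proof.
move=> mf mg _ Y mY; rewrite setTI.
have -> : (fun w => F (f w) (g w)) @^-1` Y =
    \bigcup_i \bigcup_j (f @^-1` [set i] `&` g @^-1` [set j] `&` [set _ | Y (F i j)]).
  apply/seteqP; split => [w Yw|w [i _ [j _ [[/= <- <-]]]]]//.
  by exists (f w) => //; exists (g w).
apply: bigcupT_measurable => i; apply: bigcupT_measurable => j.
apply: measurableI; first exact: measurableI.
have [YF|YF] := pselect (Y (F i j)).
  by have -> : [set _ : T | Y (F i j)] = setT by apply/seteqP; split.
by have -> : [set _ : T | Y (F i j)] = set0 by apply/seteqP; split.
Qed.

Lemma Ncount_eq0 (S : choiceType) (A M : set S) :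
  Ncount A M = Some 0%N <-> A `&` M = set0.
Proof.
rewrite /Ncount; case: pselect => [fin|nfin]; split => //.
- by case=> /eqP; rewrite cardfs_eq0 => /eqP/(fset_set_set0 fin).
- by move=> ->; rewrite fset_set0 cardfs0.
- by move=> AM0; exfalso; apply: nfin; rewrite AM0.
Qed.

Lemma NcountE (S : choiceType) (A M : set S) : finite_set M ->
  Ncount A M = Some #|` fset_set (A `&` M)|%fset.
Proof.
by move=> fM; rewrite /Ncount; case: pselect => // -[]; exact: finite_setIr.
Qed.

Lemma cr_set_measurable_Ncount d dO (S : measurableType d)
    (Omega : measurableType dO) (pi : Omega -> set S) (A : set S) k :
  cr_set pi -> measurable A -> measurable (pi @^-1` [set M | Ncount A M = k]).
Proof.
move=> [_ pi_meas] mA; apply: pi_meas; apply: sub_gen_smallest.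
by exists A => //; exists k.
Qed.

Section void_event.
Context d dO (S : measurableType d) (Omega : measurableType dO) (R : realType)
  (P : probability Omega R) (pi : Omega -> set S).

Definition void_event (A : set S) := [set w | pi w `&` A = set0].

Lemma void_event0 : void_event set0 = setT.
Proof. by apply/seteqP; split => w //= _; rewrite /void_event /= setI0. Qed.

Lemma void_eventU A B : void_event (A `|` B) = void_event A `&` void_event B.
Proof. by apply/seteqP; split => w; rewrite /void_event /= setIUr setU_eq0. Qed.

Lemma subset_void_event A B : A `<=` B -> void_event B `<=` void_event A.
Proof.
move=> AB w; rewrite /void_event /= -!subset0.
by apply: subset_trans; exact: setIS.
Qed.

Lemma void_event_bigcup (F : (set S)^nat) :
  void_event (\bigcup_n F n) = \bigcap_n void_event (F n).
Proof.
apply/seteqP; split => [w piF n _|w piF].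
  by apply: subset_void_event piF; exact: bigcup_sup.
by rewrite /void_event /= setI_bigcupr; apply/bigcup0P => n _; exact: piF.
Qed.

Lemma hitting_event A : [set w | pi w `&` A !=set0] = ~` void_event A.
Proof. by apply/seteqP; split => w /=; rewrite -set0P => /eqP. Qed.

Hypothesis pi_cr : cr_set pi.

Lemma measurable_void_event A : measurable A -> measurable (void_event A).
Proof.
move=> mA; have := cr_set_measurable_Ncount (Some 0%N) pi_cr mA.
by congr measurable; apply/seteqP; split => w; rewrite /= Ncount_eq0 setIC.
Qed.

Definition void_prob A : R := fine (P (void_event A)).

Lemma void_probE A : measurable A -> P (void_event A) = (void_prob A)%:E.
Proof.
move=> mA; rewrite /void_prob fineK// ge0_fin_numE//.
by rewrite (le_lt_trans (probability_le1 P (measurable_void_event mA))) ?ltey.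
Qed.

Lemma void_prob_ge0 A : (0 <= void_prob A)%R.
Proof. exact: fine_ge0. Qed.

Lemma neglog1m_hitting A : measurable A ->
  neglog1m (hitting P pi A) = neglog (void_prob A).
Proof.
move=> mA; have mvA := measurable_void_event mA.
rewrite /hitting hitting_event probability_setC// void_probE// -EFinB.
rewrite /neglog1m /neglog eqe /= subKr.
have [->|p0] := eqVneq (void_prob A) 0%R; first by rewrite subr0 eqxx.
by rewrite subr_eq addrC -subr_eq subrr eq_sym (negbTE p0).
Qed.

Hypothesis pi_ind : independent_increments P pi.

Lemma void_probU A B : measurable A -> measurable B -> A `&` B = set0 ->
  void_prob (A `|` B) = (void_prob A * void_prob B)%R.
Proof.
move=> mA mB AB0.
pose F (i : 'I_2) := if i == ord0 then A else B.
have mF i : measurable (F i) by rewrite /F; case: ifP.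
have F_disj (i j : 'I_2) : i != j -> F i `&` F j = set0.
  by case: i j => -[|[|//]] ? [[|[|//]] ?] //=; rewrite setIC.
have voidE C : [set w | [set Some 0%N] (Ncount C (pi w))] = void_event C.
  by apply/seteqP; split => w; rewrite /= Ncount_eq0 setIC.
have := pi_ind mF F_disj (fun=> [set Some 0%N]).
rewrite !big_ord_recr big_ord0 /= mul1e !voidE /F /= !void_probE// => indep.
have mAB : measurable (A `|` B) by exact: measurableU.
apply: EFin_inj; rewrite EFinM -indep -void_probE// void_eventU.
congr (P _); apply/seteqP; split => w /=.
  by move=> [wA wB] [[|[|//]] i] _; rewrite /= Ncount_eq0 setIC.
move=> w_void; split; [have := w_void ord0 I|have := w_void ord_max I];
by rewrite /= Ncount_eq0 setIC.
Qed.

End void_event.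

(* The two unused hypotheses only make the measure instance below available. *)
Definition hitting_measure d dO (S : measurableType d) (Omega : measurableType dO)
    (R : realType) (P : probability Omega R) (pi : Omega -> set S)
    (pi_cr : cr_set pi) & independent_increments P pi :=
  fun A => neglog1m (hitting P pi A).

Section hitting_measure.
Context d dO (S : measurableType d) (Omega : measurableType dO) (R : realType)
  (P : probability Omega R) (pi : Omega -> set S).
Variables (pi_cr : cr_set pi) (pi_ind : independent_increments P pi).

Local Notation mu := (hitting_measure pi_cr pi_ind).

Lemma hitting_measureE A : measurable A -> mu A = neglog (void_prob P pi A).
Proof. exact: neglog1m_hitting. Qed.

Let mu0 : mu set0 = 0.
Proof.
by rewrite hitting_measureE// /void_prob void_event0 probability_setT neglog1.
Qed.

Let mu_ge0 A : 0 <= mu A.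
Proof.
rewrite /hitting_measure /neglog1m; case: ifP => _; first exact: leey.
rewrite lee_fin oppr_ge0.
have [h_le1|h_gt1] := leP (fine (hitting P pi A)) 1%R; last first.
  by rewrite ln0// subr_le0 ltW.
have [|h_lt1] := leP (1 - fine (hitting P pi A))%R 0%R; first by move/ln0 ->.
by apply: ln_le0; rewrite lerBlDr lerDl fine_ge0// measure_ge0.
Qed.

Let muU A B : measurable A -> measurable B -> A `&` B = set0 ->
  mu (A `|` B) = mu A + mu B.
Proof.
move=> mA mB AB0; have mAB : measurable (A `|` B) by exact: measurableU.
by rewrite !hitting_measureE// void_probU// neglogM ?void_prob_ge0.
Qed.

Let mu_bigsetU (F : (set S)^nat) n : (forall i, measurable (F i)) ->
  trivIset setT F ->
  \sum_(0 <= i < n) mu (F i) = mu (\big[setU/set0]_(i < n) F i).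
Proof.
move=> mF tF; elim: n => [|n IHn]; first by rewrite big_nil big_ord0 mu0.
rewrite big_nat_recr//= IHn big_ord_recr/= muU//; first exact: bigsetU_measurable.
rewrite -bigcup_mkord; apply/seteqP; split => x //= [[i /= ilt Fix] Fnx].
by move: ilt; rewrite (tF i n) ?ltnn//; exists x.
Qed.

Let mu_sigma_additive : semi_sigma_additive mu.
Proof.
move=> F mF tF mUF.
pose U n := \big[setU/set0]_(i < n) F i.
have mU n : measurable (U n) by exact: bigsetU_measurable.
have UF : \bigcup_n U n = \bigcup_n F n.
  apply/seteqP; split => x; first by move=> [n _]; exact: bigsetU_bigcup.
  by move=> [n _ Fnx]; exists n.+1 => //; rewrite /U big_ord_recr; right.
have -> : (fun n => \sum_(0 <= i < n) mu (F i)) =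
    fun n => neglog (void_prob P pi (U n)).
  by apply/funext => n; rewrite mu_bigsetU//; exact: hitting_measureE (mU n).
rewrite hitting_measureE//; apply: neglog_cvg_right; first exact: void_prob_ge0.
  move=> n; rewrite -lee_fin -!void_probE//.
  apply: le_measure; rewrite ?inE; [exact: measurable_void_event..|].
  by apply: subset_void_event; exact: bigsetU_bigcup.
apply: fine_cvg; rewrite -void_probE// -UF void_event_bigcup.
apply: nonincreasing_cvg_mu.
- have mvU0 := measurable_void_event pi_cr (mU 0%N).
  by rewrite (le_lt_trans (probability_le1 _ mvU0)) ?ltey.
- by move=> n; exact: measurable_void_event.
- by rewrite -void_event_bigcup; exact/measurable_void_event/bigcupT_measurable.
- move=> m n mn; apply/subsetPset/subset_void_event.
  exact: subset_bigsetU.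
Qed.

HB.instance Definition _ := isMeasure.Build _ _ _ mu mu0 mu_ge0 mu_sigma_additive.

End hitting_measure.

Section control_measure.
Context d dO (S : measurableType d) (Omega : measurableType dO) (R : realType)
  (P : probability Omega R).
Hypothesis diag : measurable [set p : S * S | p.1 = p.2].
Variable pik : nat -> Omega -> set S.
Hypothesis pik_fin : forall k, finite_cr_set (pik k).

Local Notation card_in U k w := (#|` fset_set (U `&` pik k w)|%fset).

Lemma measurable_pik k w : measurable (pik k w).
Proof.
apply: countable_measurable => [x|]; first exact: measurable_set1_diagonal.
exact/finite_set_countable/((pik_fin k).2 w).
Qed.

Lemma measurable_card_in U k j : measurable U ->
  measurable [set w | card_in U k w = j].
Proof.
move=> mU; have := cr_set_measurable_Ncount (Some j) (pik_fin k).1 mU.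
congr measurable; apply/seteqP; split => w; have fin_w := (pik_fin k).2 w;
  rewrite /= NcountE//; [by case|by move=> ->].
Qed.

Definition control_weight k w : R :=
  (1 / (2 ^ (k + 1))%:R / (1 + (card_in setT k w)%:R))%R.

Lemma control_weight_ge0 k w : (0 <= control_weight k w)%R.
Proof. by rewrite /control_weight divr_ge0// ?divr_ge0// addr_ge0. Qed.

Definition control_kernel w : {measure set S -> \bar R} :=
  mseries (fun k => mscale (NngNum (control_weight_ge0 k w))
                          (mrestr counting (measurable_pik k w))) 0.

Lemma control_kernelE w U : control_kernel w U =
  \sum_(0 <= k <oo) (control_weight k w)%:E * (card_in U k w)%:R%:E.
Proof.
apply: eq_eseriesr => k _; rewrite /= /mscale /= /mrestr /counting asboolT//.
exact: finite_setIr ((pik_fin k).2 w).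
Qed.

Lemma measurable_control_kernel U : measurable U ->
  measurable_fun setT (fun w => control_kernel w U).
Proof.
move=> mU; under eq_fun do rewrite control_kernelE.
apply: ge0_emeasurable_sum => [k w _ _|k _].
  by rewrite mule_ge0// lee_fin control_weight_ge0.
pose F a b : \bar R := ((1 / (2 ^ (k + 1))%:R / (1 + b%:R))%:E * a%:R%:E).
apply: (@measurable_fun_nat2 _ _ _ _ _ F) => j; exact: measurable_card_in.
Qed.

Lemma control_kernel_le1 w : control_kernel w setT <= 1.
Proof.
have geo : \sum_(0 <= k <oo) (1 / (2 ^ (k + 1))%:R)%:E = (1 : \bar R).
  apply: cvg_lim => //.
  have -> : (1 : \bar R) = ((1 : R) / 2 ^+ 0)%:E by rewrite expr0 divr1.
  exact: (@cvg_geometric_eseries_half R 1 0).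
rewrite control_kernelE -geo; apply: lee_nneseries => [k _ _|k _].
  by rewrite mule_ge0// lee_fin control_weight_ge0.
rewrite -EFinM lee_fin /control_weight setTI.
set N := (#|` _ |%fset)%:R; set a := (1 / _)%R.
have N0 : (0 <= N)%R by [].
by rewrite mulrAC ler_pdivrMr ?ltr_wpDr// ler_wpM2l ?divr_ge0// lerDr.
Qed.

Lemma control_kernel_gt0 k w A x : pik k w x -> A x -> 0 < control_kernel w A.
Proof.
move=> pikx Ax.
have term_ge0 i : 0 <= (control_weight i w)%:E * (card_in A i w)%:R%:E.
  by rewrite mule_ge0// lee_fin control_weight_ge0.
apply: (@lt_le_trans _ _ ((control_weight k w)%:E * (card_in A k w)%:R%:E)).
  rewrite -EFinM lte_fin mulr_gt0//.
    by rewrite divr_gt0// ?divr_gt0// ?ltr0n ?expn_gt0// ltr_wpDr.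
  rewrite ltr0n lt0n cardfs_eq0; apply/eqP.
  move=> /(fset_set_set0 (finite_setIr _ ((pik_fin k).2 w))) /seteqP[+ _].
  by move=> /(_ x (conj Ax pikx)).
rewrite control_kernelE.
apply: le_trans (nneseries_lim_ge k.+1 (fun i _ _ => term_ge0 i)).
by rewrite big_nat_recr//=; apply: leeDr; exact: sume_ge0.
Qed.

Definition control_measure (U : set S) : \bar R := \int[P]_w control_kernel w U.

Let control0 : control_measure set0 = 0.
Proof.
rewrite /control_measure (eq_integral (cst 0)) ?integral0// => w _.
by rewrite measure0.
Qed.

Let control_ge0 U : 0 <= control_measure U.
Proof. exact: integral_ge0. Qed.

Let control_sigma_additive : semi_sigma_additive control_measure.
Proof.
move=> U mU tU mUU; rewrite [X in _ --> X](_ : _ =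
  \int[P]_w (\sum_(n <oo) control_kernel w (U n))); last first.
  apply: eq_integral => w _.
  by apply/esym/cvg_lim => //; exact/measure_semi_sigma_additive.
rewrite integral_nneseries//; last by move=> n; exact: measurable_control_kernel.
exact/is_cvg_nneseries => n _ _; exact: integral_ge0.
Qed.

HB.instance Definition _ := isMeasure.Build _ _ R control_measure
  control0 control_ge0 control_sigma_additive.

Let control_fin : fin_num_fun control_measure.
Proof.
move=> A mA; rewrite ge0_fin_numE ?measure_ge0//.
apply: (le_lt_trans (le_measure _ _ _ (subsetT A))); rewrite ?inE//.
apply: (@le_lt_trans _ _ (\int[P]_w cst 1 w)).
  apply: ge0_le_integral => //; first exact: measurable_control_kernel.
  by move=> w _; exact: control_kernel_le1.
by rewrite integral_cst// mul1e (le_lt_trans (probability_le1 P measurableT)) ?ltey.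
Qed.

HB.instance Definition _ := Measure_isFinite.Build _ _ R control_measure control_fin.

End control_measure.

Lemma hitting_measure_null_dominated d dO (S : measurableType d)
    (Omega : measurableType dO) (R : realType) (P : probability Omega R)
    (pi : Omega -> set S) (pi_cr : cr_set pi) (pi_ind : independent_increments P pi)
    (diag : measurable [set p : S * S | p.1 = p.2])
    (pik : nat -> Omega -> set S) (pik_fin : forall k, finite_cr_set (pik k)) :
  (forall w, pi w = \bigcup_k pik k w) ->
  hitting_measure pi_cr pi_ind `<< control_measure P diag pik_fin.
Proof.
move=> pi_eq; apply/null_content_dominatesP => A mA control0.
have mvA := measurable_void_event pi_cr mA.
have [|N [mN PN0 N_sup]] := (ae_eq_integral_abs P measurableT
    (measurable_control_kernel diag pik_fin mA)).1.
  rewrite -control0; apply: eq_integral => w _.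
  by rewrite gee0_abs// measure_ge0.
have hit_N : ~` void_event pi A `<=` N.
  move=> w /eqP /set0P[x [pix Ax]].
  apply: N_sup => /=; apply/not_implyP; split=> //.
  move: pix; rewrite pi_eq => -[k _ pikx].
  by apply/eqP; rewrite gt_eqF// (control_kernel_gt0 R diag pik_fin pikx Ax).
have : P (~` void_event pi A) = 0.
  by apply/eqP; rewrite -measure_le0 -PN0 le_measure// inE//; exact: measurableC.
rewrite probability_setC// void_probE// -EFinB => -[/eqP].
by rewrite subr_eq0 hitting_measureE// => /eqP <-; rewrite neglog1.
Qed.

Theorem proposition6p9 (R : realType) (d : measure_display) (S : measurableType d)
  (dO : measure_display) (Omega : measurableType dO) (P : probability Omega R)
  (pi : Omega -> set S) :
  measurable [set p : S * S | p.1 = p.2] ->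
  cr_set pi -> constructive pi -> independent_increments P pi ->
  exists mu : nat -> {finite_measure set S -> \bar R},
    forall A : set S, measurable A ->
      neglog1m (hitting P pi A) = \sum_(0 <= n <oo) mu n A.
Proof.
move=> diag pi_cr [pik [pik_fin pi_eq]] pi_ind.
have dom : hitting_measure pi_cr pi_ind `<< control_measure P diag pik_fin.
  exact: hitting_measure_null_dominated.
have [mu muE] := null_dominated_finite_sfinite dom.
by exists mu => A /muE.
Qed.
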